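(* Let $(M,\widetilde B)$ be a root of unity quantum seed and $\mathrm{inv}\subseteq[1,N]\setminus\mathrm{ex}$. Then the root of unity quantum cluster algebra $\mathcal A_\varepsilon(M,\widetilde B,\mathrm{inv})$ and the root of unity upper quantum cluster algebra $\mathcal U_\varepsilon(M,\widetilde B,\mathrm{inv})$ are both polynomial identity (PI) domains.
   Context: Let $\ell$ be a positive integer, $\mathbb Z_\ell=\mathbb Z/\ell\mathbb Z$, $\varepsilon^{1/2}\in\mathbb C$ a primitive $\ell$-th root of unity, $\varepsilon=(\varepsilon^{1/2})^2$, and $\mathcal A^{1/2}_\varepsilon=\mathbb Z[\varepsilon^{1/2}]$. For $a\in\mathbb Z_\ell$ put $\varepsilon^{a/2}=(\varepsilon^{1/2})^a$. For an integer matrix $C$, $\overline C$ denotes its reduction mod $\ell$; $e_1,\dots,e_N$ is the standard basis of $\mathbb Z^N$. For a skew-symmetric bilinear form $\Lambda:\mathbb Z^N\times\mathbb Z^N\to\mathbb Z_\ell$ (identified with its matrix $(\lambda_{ij})=(\Lambda(e_i,e_j))$), $\mathcal T_\varepsilon(\Lambda)$ is the $\mathcal A^{1/2}_\varepsilon$-algebra with basis $\{X^f\}_{f\in\mathbb Z^N}$ and product $X^fX^g=\varepsilon^{\Lambda(f,g)/2}X^{f+g}$. A root of unity toric frame of a division algebra $\mathcal F$ over $\mathbb Q(\varepsilon^{1/2})$ is a map $M:\mathbb Z^N\to\mathcal F$ for which there are a skew-symmetric $\Lambda$ (necessarily unique; denoted $\Lambda_M$) and an injective $\mathcal A^{1/2}_\varepsilon$-algebra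 homomorphism $\phi:\mathcal T_\varepsilon(\Lambda)\to\mathcal F$ with $\phi(X^f)=M(f)$ for all $f$ and with $\mathcal F$ the skew field of fractions of $\phi(\mathcal T_\varepsilon(\Lambda))$. Fix $\mathrm{ex}\subseteq[1,N]$. An exchange matrix $\widetilde B=(b_{ij})$ is an integer matrix with rows indexed by $[1,N]$ and columns by $\mathrm{ex}$; its principal part $B$ is the $\mathrm{ex}\times\mathrm{ex}$ submatrix, and $b^k\in\mathbb Z^N$ is its $k$-th column. $(\Lambda,\widetilde B)$ is $\ell$-compatible if there is $D=\mathrm{diag}(d_j)_{j\in\mathrm{ex}}$ with positive integer entries such that $DB$ is skew-symmetric and $\sum_{k=1}^N\overline b_{kj}\lambda_{ki}=\delta_{ij}\overline d_j$ in $\mathbb Z_\ell$ for all $i\in[1,N]$, $j\in\mathrm{ex}$. A root of unity quantum seed is a pair $(M,\widetilde B)$ with $M$ a root of unity toric frame and $(\Lambda_M,\widetilde B)$ $\ell$-compatible. For $b\in\mathbb Z^N$, $[b]_+$ (resp. $[b]_-$) is obtained from $b$ by replacing its negative (resp. positive) entries by $0$. Mutation in direction $k\in\mathrm{ex}$: $\mu_k(\widetilde B)=(b'_{ij})$ with $b'_{ij}=-b_{ij}$ if $i=k$ or $j=k$, and $b'_{ij}=b_{ij}+(|b_{ik}|b_{kj}+b_{ik}|b_{kj}|)/2$ otherwise; $\mu_k(M)$ is the root of unity toric frame with matrix $\overline E^\top\Lambda_M\overline E$ (where $E\in M_N(\mathbb Z)$ has $e_{ij}=\delta_{ij}$ for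 $j\ne k$, $e_{kk}=-1$, $e_{ik}=\max(0,-b_{ik})$ for $i\neq k$) and $\mu_k(M)(e_j)=M(e_j)$ for $j\neq k$, $\mu_k(M)(e_k)=M(-e_k+[b^k]_+)+M(-e_k-[b^k]_-)$; $\mu_k(M,\widetilde B)=(\mu_k(M),\mu_k(\widetilde B))$ is again a root of unity quantum seed. Seeds related by finite sequences of mutations are mutation-equivalent. The cluster variables of a seed $(M',\widetilde B')$ are $M'(e_i)$, $i\in[1,N]$; those with $i\notin\mathrm{ex}$ (frozen) are common to all mutation-equivalent seeds. For $\mathrm{inv}\subseteq[1,N]\setminus\mathrm{ex}$, $\mathcal A_\varepsilon(M,\widetilde B,\mathrm{inv})$ is the $\mathcal A^{1/2}_\varepsilon$-subalgebra of $\mathcal F$ generated by all cluster variables of all seeds mutation-equivalent to $(M,\widetilde B)$ and by $M(e_j)^{-1}$, $j\in\mathrm{inv}$; $\mathcal U_\varepsilon(M,\widetilde B,\mathrm{inv})$ is the intersection over all seeds $(M',\widetilde B')$ mutation-equivalent to $(M,\widetilde B)$ of the subalgebras $\mathcal A^{1/2}_\varepsilon\langle M'(e_i),M'(e_j)^{-1}: i\in[1,N],\ j\in\mathrm{ex}\sqcup\mathrm{inv}\rangle$ of $\mathcal F$. *)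

From HB Require Import structures.
From mathcomp Require Import all_boot all_order all_algebra.
Set Implicit Arguments. Unset Strict Implicit. Unset Printing Implicit Defensive.
Import Order.TTheory GRing.Theory Num.Theory.
Local Open Scope ring_scope.

Section RootOfUnityClusters.

(* l : the order of the root of unity eps^{1/2};
   K : a field playing the role of Q(eps^{1/2}), z : K the element eps^{1/2};
   F : a division algebra over K;  N : rank, vectors of Z^N are 'cV[int]_N. *)
Variables (l N : nat) (K : fieldType) (z : K) (F : unitAlgType K).

Definition vec := 'cV[int]_N.

Definition ebasis (i : 'I_N) : vec := delta_mx i 0.

(* the value Lambda(f,g) = f^T L g (an integer representative of an element of Z_l) *)
Definition bil (L : 'M[int]_N) (f g : vec) : int := (f^T *m L *m g) 0 0.

(* membership in A^{1/2}_eps = Z[eps^{1/2}] inside K *)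
Definition inA (a : K) : Prop := exists p : {poly int}, a = (map_poly intr p).[z].

Definition skew_mod (L : 'M[int]_N) : Prop :=
  forall i j, (L i j = - L j i %[mod (Posz l)])%Z.

Definition div_subalg (S : F -> Prop) : Prop :=
  [/\ S 1, (forall x y, S x -> S y -> S (x + y)), (forall x, S x -> S (- x)),
      (forall x y, S x -> S y -> S (x * y)) &
      (forall (a : K) x, S x -> S (a *: x)) /\
      (forall x, x != 0 -> S x -> S x^-1)].

(* M is a root of unity toric frame with (a representative L of) the form
   Lambda_M: the map X^f |-> M f is an injective A-algebra homomorphism
   T_eps(Lambda) -> F (multiplicativity on the basis + A-linear independence of
   the M f) and F is the skew field of fractions of its image (F is generated by
   the M f as a division K-algebra). *)
Definition toric_frame_with (M : vec -> F) (L : 'M[int]_N) : Prop :=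
  [/\ skew_mod L,
      (forall f g : vec, M f * M g = (z ^ bil L f g) *: M (f + g)),
      (forall (s : seq vec) (c : vec -> K), uniq s -> (forall f, inA (c f)) ->
          \sum_(f <- s) c f *: M f = 0 -> forall f, f \in s -> c f = 0)
    & (forall S : F -> Prop, div_subalg S -> (forall f, S (M f)) -> forall x, S x)].

Definition toric_frame (M : vec -> F) : Prop := exists L, toric_frame_with M L.

(* exchange matrices: N x N integer matrices, only the columns indexed by ex matter *)
Definition l_compatible (ex : {set 'I_N}) (L B : 'M[int]_N) : Prop :=
  exists d : 'I_N -> nat,
    [/\ (forall j, j \in ex -> (0 < d j)%N),
        (forall i j, i \in ex -> j \in ex -> (d i)%:Z * B i j = - ((d j)%:Z * B j i))
      & (forall i j, j \in ex ->
           (\sum_(k < N) B k j * L k i = (if i == j then (d j)%:Z else 0)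
              %[mod (Posz l)])%Z)].

Definition quantum_seed (ex : {set 'I_N}) (M : vec -> F) (B : 'M[int]_N) : Prop :=
  exists L, toric_frame_with M L /\ l_compatible ex L B.

Definition mutB (k : 'I_N) (B : 'M[int]_N) : 'M[int]_N :=
  \matrix_(i, j)
    if (i == k) || (j == k) then - B i j
    else B i j + ((`|B i k| * B k j + B i k * `|B k j|) %/ 2)%Z.

Definition mutE (k : 'I_N) (B : 'M[int]_N) : 'M[int]_N :=
  \matrix_(i, j)
    if j != k then (i == j)%:Z
    else if i == k then -1 else Num.max 0 (- B i k).

Definition vpos (b : vec) : vec := map_mx (fun x => Num.max x 0) b.
Definition vneg (b : vec) : vec := map_mx (fun x => Num.min x 0) b.

Definition seed := ((vec -> F) * 'M[int]_N)%type.

Definition mutation (ex : {set 'I_N}) (k : 'I_N) (S S' : seed) : Prop :=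
  let: (M, B) := S in let: (M', B') := S' in
  [/\ k \in ex, B' = mutB k B,
      exists L, toric_frame_with M L /\
                toric_frame_with M' ((mutE k B)^T *m L *m mutE k B),
      (forall j, j != k -> M' (ebasis j) = M (ebasis j))
    & M' (ebasis k) = M (- ebasis k + vpos (col k B)) + M (- ebasis k - vneg (col k B))].

Inductive mut_equiv (ex : {set 'I_N}) (S : seed) : seed -> Prop :=
  | meq_refl : mut_equiv ex S S
  | meq_step k S1 S2 : mut_equiv ex S S1 -> mutation ex k S1 S2 -> mut_equiv ex S S2.

Inductive in_cluster_alg (ex inv : {set 'I_N}) (M : vec -> F) (B : 'M[int]_N) : F -> Prop :=
  | ca_var M' B' i : mut_equiv ex (M, B) (M', B') ->
      in_cluster_alg ex inv M B (M' (ebasis i))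
  | ca_inv j : j \in inv -> in_cluster_alg ex inv M B (M (ebasis j))^-1
  | ca_one : in_cluster_alg ex inv M B 1
  | ca_add x y : in_cluster_alg ex inv M B x -> in_cluster_alg ex inv M B y ->
      in_cluster_alg ex inv M B (x + y)
  | ca_opp x : in_cluster_alg ex inv M B x -> in_cluster_alg ex inv M B (- x)
  | ca_mul x y : in_cluster_alg ex inv M B x -> in_cluster_alg ex inv M B y ->
      in_cluster_alg ex inv M B (x * y)
  | ca_scale a x : inA a -> in_cluster_alg ex inv M B x ->
      in_cluster_alg ex inv M B (a *: x).

Inductive in_laurent (J : {set 'I_N}) (M : vec -> F) : F -> Prop :=
  | la_var i : in_laurent J M (M (ebasis i))
  | la_inv j : j \in J -> in_laurent J M (M (ebasis j))^-1
  | la_one : in_laurent J M 1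
  | la_add x y : in_laurent J M x -> in_laurent J M y -> in_laurent J M (x + y)
  | la_opp x : in_laurent J M x -> in_laurent J M (- x)
  | la_mul x y : in_laurent J M x -> in_laurent J M y -> in_laurent J M (x * y)
  | la_scale a x : inA a -> in_laurent J M x -> in_laurent J M (a *: x).

Definition in_upper_cluster_alg (ex inv : {set 'I_N}) (M : vec -> F) (B : 'M[int]_N)
  (x : F) : Prop :=
  forall M' B', mut_equiv ex (M, B) (M', B') -> in_laurent (ex :|: inv) M' x.

End RootOfUnityClusters.

(* A subring S of a ring R (given as a predicate closed under the ring operations)
   is a PI domain: it has no zero divisors (and 1 != 0), and it satisfies a
   polynomial identity: there is a noncommutative polynomial
   f = sum_{w in ws} c_w x_w  in Z<x_0,...,x_{n-1}>  (ws a list of distinct words,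
   x_w the product of the letters of w in order) with some coefficient equal to 1,
   such that f vanishes for every substitution of elements of S. *)
Definition PI_domain (R : nzRingType) (S : R -> Prop) : Prop :=
  (forall x y, S x -> S y -> x * y = 0 -> x = 0 \/ y = 0) /\
  exists (n : nat) (ws : seq (seq 'I_n)) (c : seq 'I_n -> int),
    [/\ uniq ws, (exists2 w, w \in ws & c w = 1)
      & forall xs : 'I_n -> R, (forall i, S (xs i)) ->
          \sum_(w <- ws) (c w)%:~R * \prod_(i <- w) xs i = 0].

From HB Require Import structures.
From mathcomp Require Import all_boot all_order all_algebra all_fingroup.
From Stdlib Require Import ClassicalEpsilon.
Set Implicit Arguments. Unset Strict Implicit. Unset Printing Implicit Defensive.
Import Order.TTheory GRing.Theory Num.Theory.
Local Open Scope ring_scope.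

(* Since [z ^+ l = 1], the monomials [M (l q)] are central in [F], so every
   monomial [M g] is a central multiple of one of the finitely many [M r] with
   [0 <= r_i < l]. The central span of these monomials is closed under products
   and, being finite-dimensional over the centre (a field), under inverses: the
   powers of [x] are linearly dependent over the centre, and cancelling powers of
   [x] in a dependence relation expresses [x^-1] through powers of [x]. As [F] is
   generated by the monomials as a division algebra, [F] is spanned over its
   centre by [l ^ N] elements, hence satisfies the standard identity of degree
   [l ^ N + 1]; since [F] is a division ring, each of its subrings is a PI domain. *)

Section StandardPolynomial.
Variable R : pzRingType.

Definition standard_poly n (y : 'I_n -> R) : R :=
  \sum_(s : 'S_n) (-1) ^+ s * \prod_(t < n) y (s t).

Lemma eq_standard_poly n (y y' : 'I_n -> R) : y =1 y' -> standard_poly y = standard_poly y'.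
Proof. by move=> eq_y; apply: eq_bigr => s _; under eq_bigr do rewrite eq_y. Qed.

Lemma standard_poly_alternate n (y : 'I_n -> R) i j :
  i != j -> y i = y j -> standard_poly y = 0.
Proof.
move=> neq_ij eq_yij; pose t := tperm i j.
have oddMt s : (s * t)%g = ~~ s :> bool by rewrite odd_permM odd_tperm neq_ij addbT.
rewrite /standard_poly (bigID (@odd_perm _)) /=.
apply: canLR (subrK _) _; rewrite add0r -sumrN.
rewrite (reindex_inj (mulIg t)); apply: eq_big => //= s.
rewrite oddMt => /negPf->; rewrite mulN1r mul1r; congr (- _).
by apply: eq_bigr => k _; rewrite permM /t; case: tpermP => // ->.
Qed.

End StandardPolynomial.

Section Center.
Variable R : unitRingType.

(* Centrality is decided classically, so that the centre can be built as a subtype. *)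
Definition central (x : R) : bool :=
  if excluded_middle_informative (forall y, GRing.comm x y) then true else false.

Lemma centralP x : reflect (forall y, GRing.comm x y) (central x).
Proof. by rewrite /central; case: excluded_middle_informative; constructor. Qed.

Lemma central_divring_closed : divring_closed central.
Proof.
split.
- by apply/centralP => y; rewrite /GRing.comm mul1r mulr1.
- move=> x y /centralP cx /centralP cy; apply/centralP => w.
  by apply/commr_sym/commrB; apply/commr_sym.
- move=> x y /centralP cx /centralP cy; apply/centralP => w.
  by apply/commr_sym/commrM; [apply/commr_sym | apply/commrV/commr_sym].
Qed.

Record center := Center { center_val : R; center_valP : central center_val }.
HB.instance Definition _ := [isSub for center_val].
HB.instance Definition _ := [Choice of center by <:].
HB.instance Definition _ :=
  GRing.SubChoice_isSubUnitRing.Build R central center central_divring_closed.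

Lemma center_valC (c : center) (y : R) : GRing.comm (val c) y.
Proof. exact: (centralP _ (valP c)). Qed.

Lemma center_mulC : commutative (@GRing.mul center).
Proof. by move=> c d; apply: val_inj; rewrite /= center_valC. Qed.
HB.instance Definition _ := GRing.PzSemiRing_hasCommutativeMul.Build center center_mulC.

Lemma center_field_axiom :
  (forall x : R, x != 0 -> x \is a GRing.unit) -> GRing.field_axiom center.
Proof.
move=> R_division c c_neq0; apply: R_division.
by apply: contra c_neq0 => /eqP c0; apply/eqP/val_inj.
Qed.

Lemma prod_center_valM (I : eqType) (r : seq I) (c : I -> center) (f : I -> R) :
  \prod_(i <- r) (val (c i) * f i) = val (\prod_(i <- r) c i) * \prod_(i <- r) f i.
Proof. by rewrite prodrM_comm ?rmorph_prod // => i j _ _; apply: center_valC. Qed.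

Lemma standard_poly_central_comb (B : finType) (a : B -> R) n (U : 'I_n -> B -> center) :
  standard_poly (fun t => \sum_b val (U t b) * a b) =
  \sum_(f : {ffun 'I_n -> B}) val (\prod_t U t (f t)) * standard_poly (fun t => a (f t)).
Proof.
rewrite /standard_poly; under [RHS]eq_bigr => f _ do rewrite big_distrr.
rewrite exchange_big /=; apply: eq_bigr => s _.
rewrite bigA_distr_bigA big_distrr /=.
rewrite (reindex_inj (h := fun g : {ffun 'I_n -> B} => [ffun t => g (s t)])); last first.
  by move=> g h /ffunP eq_gh; apply/ffunP => k; have := eq_gh (s^-1 k)%g; rewrite !ffunE permKV.
apply: eq_bigr => g _; under eq_bigr do rewrite ffunE.
rewrite prod_center_valM mulrA -center_valC -mulrA; congr (val _ * _).
by rewrite [RHS](reindex_inj (@perm_inj _ s)).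
Qed.

Lemma standard_identity_central_span (B : finType) (a : B -> R) n :
    (#|B| < n)%N -> forall y : 'I_n -> R,
  (forall t, exists u : B -> center, y t = \sum_b val (u b) * a b) ->
  standard_poly y = 0.
Proof.
move=> B_lt_n y /fin_all_exists[U eq_y].
rewrite (eq_standard_poly eq_y) standard_poly_central_comb big1 // => f _.
have /injectivePn[i [j neq_ij eq_fij]] : ~~ injectiveb f.
  by apply: contraL B_lt_n => /injectiveP/leq_card; rewrite card_ord -leqNgt.
by rewrite (standard_poly_alternate neq_ij) ?mulr0 //= eq_fij.
Qed.

End Center.

Definition perm_word n (s : 'S_n) : seq 'I_n := [seq s t | t <- enum 'I_n].

Lemma perm_word_inj n : injective (@perm_word n).
Proof. by move=> s t /eq_in_map eq_st; apply/permP => k; apply: eq_st; rewrite mem_enum. Qed.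

Lemma PI_domain_standard (R : nzRingType) (S : R -> Prop) n :
  (forall x y, S x -> S y -> x * y = 0 -> x = 0 \/ y = 0) ->
  (forall y : 'I_n -> R, (forall t, S (y t)) -> standard_poly y = 0) ->
  PI_domain S.
Proof.
move=> S_domain S_standard; split=> //.
pose c (w : seq 'I_n) : int := \sum_(s : 'S_n | perm_word s == w) (-1) ^+ s.
have c_word s : c (perm_word s) = (-1) ^+ s.
  by rewrite /c (big_pred1 s) // => t /=; rewrite (inj_eq (@perm_word_inj n)).
exists n, [seq perm_word s | s <- enum 'S_n], c; split.
- by rewrite map_inj_uniq ?enum_uniq //; apply: perm_word_inj.
- by exists (perm_word 1); [apply: map_f; rewrite mem_enum | rewrite c_word odd_perm1].
move=> y /S_standard; apply: etrans.
rewrite big_map big_enum; apply: eq_bigr => s _.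
by rewrite c_word rmorph_sign /perm_word big_map enumT.
Qed.

Lemma rV_kernel_nonzero (E : fieldType) m (A : 'M[E]_(m.+1, m)) :
  exists2 w : 'rV_m.+1, w *m A = 0 & w != 0.
Proof.
have : kermx A != 0.
  by rewrite kermx_eq0 /row_free ltn_eqF // ltnS rank_leq_col.
by case/rowV0Pn => w /sub_kermxP; exists w.
Qed.

Section FiniteOverCenter.
Variable R : unitRingType.
Hypothesis R_division : forall x : R, x != 0 -> x \is a GRing.unit.
HB.instance Definition _ :=
  GRing.ComUnitRing_isField.Build (center R) (center_field_axiom R_division).

Variables (S : R -> Prop) (B : finType) (a : B -> R).
Hypotheses (S_center : forall c : center R, S (val c))
  (S_add : forall x y, S x -> S y -> S (x + y))
  (S_mul : forall x y, S x -> S y -> S (x * y))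
  (S_span : forall x, S x -> exists u : B -> center R, x = \sum_b val (u b) * a b).

Let S_sum (I : Type) (r : seq I) (f : I -> R) :
  (forall i, S (f i)) -> S (\sum_(i <- r) f i).
Proof. by move=> Sf; apply: big_ind => //; exact: (S_center 0). Qed.

Let S_exp x n : S x -> S (x ^+ n).
Proof.
move=> Sx; elim: n => [|n Sxn]; last by rewrite exprS; apply: S_mul.
by rewrite expr0; exact: (S_center 1).
Qed.

Lemma invr_central_relation x : S x -> x != 0 -> forall n (c : nat -> center R),
  \sum_(i < n) val (c i) * x ^+ i = 0 -> (exists2 i, (i < n)%N & c i != 0) -> S x^-1.
Proof.
move=> Sx /R_division x_unit; elim=> [|n IHn] c; first by move=> _ [].
rewrite big_ord_recl expr0 mulr1.
set Y := \sum_(i < n) val (c i.+1) * x ^+ i.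
have -> : \sum_(i < n) val (c (bump 0 i)) * x ^+ bump 0 i = x * Y.
  by rewrite mulr_sumr; apply: eq_bigr => i _; rewrite exprS mulrA center_valC mulrA.
have SY : S Y by apply: S_sum => i; apply: S_mul; [apply: S_center | apply: S_exp].
move=> rel [i lt_in ci_neq0]; have [c0_eq0 | c0_neq0] := eqVneq (c 0%N) 0.
  apply: (IHn (fun i => c i.+1)).
    by apply: (mulrI x_unit); rewrite mulr0; move: rel; rewrite c0_eq0 rmorph0 add0r.
  case: i lt_in ci_neq0 => [|i] lt_in ci_neq0; last by exists i.
  by rewrite c0_eq0 eqxx in ci_neq0.
have c0_unit : val (c 0%N) \is a GRing.unit.
  by apply: R_division; apply: contra c0_neq0 => /eqP c0; apply/eqP/val_inj.
have -> : x^-1 = Y * val (- (c 0%N)^-1).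
  have -> : Y = x^-1 * - val (c 0%N).
    by apply: (mulrI x_unit); rewrite mulVKr //; apply/eqP; rewrite -addr_eq0 addrC rel.
  by rewrite rmorphN rmorphV ?unitfE // -mulrA mulrNN mulrA mulrK.
exact: S_mul SY (S_center _).
Qed.

Lemma invr_finite_over_center x : S x -> S x^-1.
Proof.
move=> Sx; have [-> | x_neq0] := eqVneq x 0; first by rewrite invr0; exact: (S_center 0).
pose m := #|B|.
have /fin_all_exists[U eq_U] : forall i : 'I_m.+1, exists u : B -> center R,
  x ^+ i = \sum_b val (u b) * a b by move=> i; apply/S_span/S_exp.
have [w wA w_neq0] := rV_kernel_nonzero (\matrix_(i, j) U i (enum_val j)).
apply: (invr_central_relation Sx x_neq0 (c := fun i => w 0 (inord i)) (n := m.+1)).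
  rewrite (eq_bigr (fun i => \sum_b val (w 0 i * U i b) * a b)); last first.
    move=> i _; rewrite inord_val eq_U mulr_sumr.
    by apply: eq_bigr => b _; rewrite rmorphM mulrA.
  rewrite exchange_big big1 // => b _; rewrite -mulr_suml -rmorph_sum.
  have -> : \sum_i w 0 i * U i b = (w *m \matrix_(i, j) U i (enum_val j)) 0 (enum_rank b).
    by rewrite mxE; apply: eq_bigr => i _; rewrite mxE enum_rankK.
  by rewrite wA mxE rmorph0 mul0r.
case/rV0Pn: w_neq0 => i wi_neq0; exists i => //; by rewrite inord_val.
Qed.

End FiniteOverCenter.

Lemma absz_modz_lt (d : nat) (a : int) : (0 < d)%N -> (`|(a %% d)%Z| < d)%N.
Proof.
move=> d_gt0; have d_neq0 : d%:Z != 0 by rewrite eqz_nat -lt0n.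
by rewrite -ltz_nat abszE ger0_norm ?modz_ge0 ?ltz_pmod ?ltz_nat.
Qed.

Section QuantumTorus.
Variables (l N : nat) (K : fieldType) (z : K) (F : unitAlgType K).
Hypotheses (l_gt0 : (0 < l)%N) (z_l : z ^+ l = 1).
Hypothesis F_division : forall x : F, x != 0 -> x \is a GRing.unit.
Variables (M : vec N -> F) (L : 'M[int]_N).
Hypotheses (M_mul : forall f g, M f * M g = z ^ bil L f g *: M (f + g))
  (M0_neq0 : M 0 != 0)
  (M_generates : forall S : F -> Prop, div_subalg S -> (forall f, S (M f)) -> forall x, S x).

Lemma M0 : M 0 = 1.
Proof.
apply: (mulrI (F_division M0_neq0)).
by rewrite mulr1 M_mul addr0 /bil trmx0 !mul0mx mxE expr0z scale1r.
Qed.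

Lemma expz_lmul (k : int) : z ^ (l%:Z * k) = 1.
Proof. by rewrite -exprz_exp -exprnP z_l exp1rz. Qed.

Lemma M_lscale_mul q f : M (l%:Z *: q) * M f = M (l%:Z *: q + f).
Proof. by rewrite M_mul /bil linearZ /= -!scalemxAl mxE expz_lmul scale1r. Qed.

Lemma M_lscale_comm q f : GRing.comm (M (l%:Z *: q)) (M f).
Proof.
by rewrite /GRing.comm M_lscale_mul M_mul addrC /bil -scalemxAr mxE expz_lmul scale1r.
Qed.

Lemma central_of_comm_M x : (forall f, GRing.comm x (M f)) -> central x.
Proof.
move=> x_comm; apply/centralP; apply: M_generates x_comm; split.
- exact: commr1.
- exact: commrD.
- exact: commrN.
- exact: commrM.
split=> [c y | y y_neq0 /commrV //].
by rewrite /GRing.comm -scalerAl -scalerAr => ->.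
Qed.

Definition residue_vec (b : {ffun 'I_N -> 'I_l}) : vec N := \col_i (b i : nat)%:Z.
Definition vec_residue (g : vec N) : {ffun 'I_N -> 'I_l} :=
  [ffun i => Ordinal (absz_modz_lt (g i 0) l_gt0)].
Definition vec_quot (g : vec N) : vec N := map_mx (fun a => (a %/ l)%Z) g.

Lemma vec_divz_eq g : g = l%:Z *: vec_quot g + residue_vec (vec_residue g).
Proof.
apply/matrixP => i j; rewrite (ord1 j) !mxE ffunE /=.
have l_neq0 : l%:Z != 0 by rewrite eqz_nat -lt0n.
by rewrite abszE ger0_norm ?modz_ge0 // mulrC -divz_eq.
Qed.

Lemma central_M_lscale q : central (M (l%:Z *: q)).
Proof. exact/central_of_comm_M/M_lscale_comm. Qed.

Definition M_lscale_center (q : vec N) : center F := Center (central_M_lscale q).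

Lemma central_scalar (k : K) : central (k%:A : F).
Proof. by apply/centralP => y; rewrite /GRing.comm mulr_algl mulr_algr. Qed.

Definition scalar_center (k : K) : center F := Center (central_scalar k).

Definition central_span (x : F) : Prop :=
  exists s : seq (center F * vec N), x = \sum_(p <- s) val p.1 * M p.2.

Lemma central_span_center (c : center F) : central_span (val c).
Proof. by exists [:: (c, 0)]; rewrite big_seq1 M0 mulr1. Qed.

Lemma central_span_M f : central_span (M f).
Proof. by exists [:: (1, f)]; rewrite big_seq1 rmorph1 mul1r. Qed.

Lemma central_span_add x y : central_span x -> central_span y -> central_span (x + y).
Proof. by move=> [s ->] [t ->]; exists (s ++ t); rewrite big_cat. Qed.

Lemma central_span_mul x y : central_span x -> central_span y -> central_span (x * y).
Proof.
move=> [s ->] [t ->].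
exists [seq (p.1 * q.1 * scalar_center (z ^ bil L p.2 q.2), p.2 + q.2) | p <- s, q <- t].
rewrite big_allpairs_dep mulr_suml; apply: eq_bigr => p _.
rewrite mulr_sumr; apply: eq_bigr => q _.
rewrite /= -!mulrA; congr (_ * _).
rewrite [in RHS]mulr_algl -M_mul [in RHS]mulrA [in LHS]mulrA; congr (_ * _).
exact/commr_sym/center_valC.
Qed.

Lemma central_span_residues x : central_span x ->
  exists u : {ffun 'I_N -> 'I_l} -> center F, x = \sum_b val (u b) * M (residue_vec b).
Proof.
move=> [s ->].
exists (fun b => \sum_(p <- s | vec_residue p.2 == b) p.1 * M_lscale_center (vec_quot p.2)).
under [RHS]eq_bigr do rewrite rmorph_sum mulr_suml.
rewrite (exchange_big_dep predT) //=; apply: eq_bigr => p _.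
rewrite (big_pred1 (vec_residue p.2)) => [|b]; last by rewrite eq_sym.
by rewrite -mulrA M_lscale_mul -vec_divz_eq.
Qed.

Lemma central_spanT x : central_span x.
Proof.
have central_span_cmul (c : center F) y : central_span y -> central_span (val c * y).
  exact/central_span_mul/central_span_center.
apply: M_generates (central_span_M) x; split.
- exact: (central_span_center 1).
- exact: central_span_add.
- by move=> y /(central_span_cmul (-1)); rewrite rmorphN1 mulN1r.
- exact: central_span_mul.
split=> [k y /(central_span_cmul (scalar_center k)) | y _].
  by rewrite /= mulr_algl.
exact: (invr_finite_over_center F_division central_span_center central_span_add
  central_span_mul central_span_residues).
Qed.

Lemma torus_PI_domain (S : F -> Prop) : PI_domain S.
Proof.
apply: (@PI_domain_standard _ _ #|{ffun 'I_N -> 'I_l}|.+1).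
  move=> x y _ _ xy0; have [-> | /F_division x_unit] := eqVneq x 0; first by left.
  by right; rewrite -(mulKr x_unit y) xy0 mulr0.
move=> y _; apply: (standard_identity_central_span (a := fun b => M (residue_vec b))) => //.
by move=> t; apply/central_span_residues/central_spanT.
Qed.

End QuantumTorus.

Lemma toric_frame_neq0 l N (K : fieldType) (z : K) (F : unitAlgType K)
    (M : vec N -> F) (L : 'M[int]_N) f :
  toric_frame_with l z M L -> M f != 0.
Proof.
case=> _ _ M_free _; apply/eqP => Mf0.
have one_inA : inA z 1 by exists 1; rewrite rmorph1 hornerC.
have := M_free [:: f] (fun _ => 1) erefl (fun _ => one_inA).
rewrite big_seq1 scale1r Mf0 => /(_ erefl f).
by rewrite mem_seq1 eqxx => /(_ erefl)/eqP; rewrite oner_eq0.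
Qed.

Theorem theorem3p11
  (l N : nat) (K : fieldType) (z : K) (F : unitAlgType K)
  (hl : (0 < l)%N) (hz : l.-primitive_root z)
  (hchar : [pchar K] =i pred0)
  (hK : forall x : K, exists p : {poly rat}, x = (map_poly ratr p).[z])
  (hF : forall x : F, x != 0 -> x \is a GRing.unit)
  (ex inv : {set 'I_N}) (M : vec N -> F) (B : 'M[int]_N)
  (hseed : quantum_seed l z ex M B)
  (hinv : inv \subset ~: ex) :
  PI_domain (in_cluster_alg l z ex inv M B) /\
  PI_domain (in_upper_cluster_alg l z ex inv M B).
Proof.
(* Only the toric frame of the seed matters: the whole skew field [F] is a PI domain. *)
have [L [frame _]] := hseed.
have [_ M_mul _ M_generates] := frame.
have M0_neq0 := toric_frame_neq0 0 frame.
by split; apply: (torus_PI_domain hl (prim_expr_order hz) hF M_mul M0_neq0 M_generates).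
Qed.
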